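(* Let $0\le\alpha<\tfrac12$ and let $D$ be a distribution on $\{0,1\}^n$ given by a tree BN (every node has at most one parent and the underlying graph is a rooted tree) with all conditional probabilities in $(0,1)$ that is $\alpha$-difference bounded. Then every conjunction $f$ of $d$ literals satisfies $$L_1(f)\le\left(\frac{2-2\alpha}{1-2\alpha}\right)^{2d}.$$
   Context: For a BN with parent sets $\operatorname{pa}(v)$, let $\mu_{v,x_{\operatorname{pa}(v)}}=P(X_v=1\mid X_{\operatorname{pa}(v)}=x_{\operatorname{pa}(v)})$ and $\sigma_{v,x_{\operatorname{pa}(v)}}=\sqrt{\mu_{v,x_{\operatorname{pa}(v)}}(1-\mu_{v,x_{\operatorname{pa}(v)}})}$. The BN is $\alpha$-difference bounded if for every $v$ and every two assignments $x,y$ to $\operatorname{pa}(v)$, $|\mu_{v,x}-\mu_{v,y}|\le\alpha$ and $|\sigma_{v,x}-\sigma_{v,y}|\le\alpha$. The BN-induced basis is $\phi_v(x)=(x_v-\mu_{v,x_{\operatorname{pa}(v)}})/\sigma_{v,x_{\operatorname{pa}(v)}}$, $\phi_S=\prod_{v\in S}\phi_v$; $\hat f_S=\mathbb{E}_D[f(X)\phi_S(X)]$; $L_1(f)=\sum_{S\subseteq[n]}|\hat f_S|$. A conjunction of $d$ literals is $f(x)=\prod_{i\in T_1}x_i\prod_{j\in T_0}(1-x_j)$ with $T_0,T_1$ disjoint and $|T_0\cup T_1|=d$. *)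

From mathcomp Require Import all_boot all_order all_algebra.
Set Implicit Arguments. Unset Strict Implicit. Unset Printing Implicit Defensive.
Import Order.TTheory GRing.Theory Num.Theory.
Local Open Scope ring_scope.

(* A Bayesian network over n binary variables with at most one parent per node.
   par v = Some p : p is the parent of v; par v = None : v has no parent.
   q v b = P(X_v = 1 | X_{par v} = b); for a parentless node only q v false is used. *)
Section BN.
Variables (R : rcfType) (n : nat).
Variable par : 'I_n -> option 'I_n.
Variable q : 'I_n -> bool -> R.

Definition assignment := {ffun 'I_n -> bool}.

Definition bn_mu (v : 'I_n) (x : assignment) : R :=
  match par v with Some p => q v (x p) | None => q v false end.

Definition bn_sigma (v : 'I_n) (x : assignment) : R :=
  Num.sqrt (bn_mu v x * (1 - bn_mu v x)).

Definition bn_prob (x : assignment) : R :=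
  \prod_(v < n) (if x v then bn_mu v x else 1 - bn_mu v x).

Definition bn_phi (v : 'I_n) (x : assignment) : R :=
  (((x v : nat)%:R) - bn_mu v x) / bn_sigma v x.

Definition bn_phiS (S : {set 'I_n}) (x : assignment) : R :=
  \prod_(v in S) bn_phi v x.

Definition bn_coef (f : assignment -> R) (S : {set 'I_n}) : R :=
  \sum_(x : assignment) bn_prob x * (f x * bn_phiS S x).

Definition bn_L1 (f : assignment -> R) : R :=
  \sum_(S : {set 'I_n}) `|bn_coef f S|.

Definition parent_step (u : 'I_n) : 'I_n := odflt u (par u).

Definition is_rooted_tree : Prop :=
  exists r : 'I_n,
    par r = None /\
    (forall v, par v = None -> v = r) /\
    (forall v, exists k : nat, iter k parent_step v = r).

Definition cond_probs_open : Prop :=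
  forall v x, 0 < bn_mu v x /\ bn_mu v x < 1.

Definition diff_bounded (alpha : R) : Prop :=
  forall v (x y : assignment),
    `|bn_mu v x - bn_mu v y| <= alpha /\ `|bn_sigma v x - bn_sigma v y| <= alpha.
End BN.

Definition conjunction (R : rcfType) (n : nat) (T0 T1 : {set 'I_n})
  (x : {ffun 'I_n -> bool}) : R :=
  (\prod_(i in T1) ((x i : nat)%:R)) * \prod_(j in T0) (1 - ((x j : nat)%:R)).

From mathcomp Require Import all_boot all_order all_algebra.
From mathcomp Require Import ring lra.
Import Order.TTheory GRing.Theory Num.Theory.
Local Open Scope ring_scope.
Set Implicit Arguments. Unset Strict Implicit. Unset Printing Implicit Defensive.

(* Write each coefficient as a sum over assignments and sum out the nodes of
   the tree leaf by leaf.  Summing out a leaf [l] (with [phi_l] absent from or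
   present in [S]) turns its weight [g] into one of two messages, the mean
   [(1 - mu) g(0) + mu g(1)] or the deviation [sigma (g(1) - g(0))], which is
   multiplied into the weight of the parent (into the scalar in front, for the
   root).  With [t = 1/(2 - 4 alpha)], the norm
   [N g = max |g| + t |g(1) - g(0)|] is submultiplicative, and
   alpha-difference boundedness gives [N(mean) + N(deviation) <= N g].  Hence
   the L1 norm of a product [prod_v psi_v(x_v)] is at most [prod_v N psi_v];
   a literal has [N = 1 + t <= ((2 - 2 alpha)/(1 - 2 alpha))^2], any other
   node [N = 1]. *)

Section WeightedNorm.
Variables (R : realFieldType) (t : R).

Definition wnorm (g : bool -> R) : R :=
  Num.max `|g false| `|g true| + t * `|g true - g false|.

Lemma wnorm_const a : wnorm (fun _ => a) = `|a|.
Proof. by rewrite /wnorm maxxx subrr normr0 mulr0 addr0. Qed.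

Hypothesis t_ge0 : 0 <= t.

Lemma wnorm_ge0 g : 0 <= wnorm g.
Proof. by rewrite addr_ge0 ?mulr_ge0 // le_max normr_ge0. Qed.

Lemma wnorm_mul f g : wnorm (fun b => f b * g b) <= wnorm f * wnorm g.
Proof.
rewrite /wnorm.
set Mf := Num.max `|f false| _; set Mg := Num.max `|g false| _.
set Df := `|f true - f false|; set Dg := `|g true - g false|.
have le_Mf b : `|f b| <= Mf by case: b; rewrite le_max lexx ?orbT.
have le_Mg b : `|g b| <= Mg by case: b; rewrite le_max lexx ?orbT.
have max_le : Num.max `|f false * g false| `|f true * g true| <= Mf * Mg.
  by rewrite ge_max !normrM !ler_pM.
have diff_le : `|f true * g true - f false * g false| <= Df * Mg + Mf * Dg.
  rewrite (_ : _ - _ = (f true - f false) * g true + f false * (g true - g false));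
    last by ring.
  by rewrite (le_trans (ler_normD _ _)) // !normrM lerD ?ler_pM.
have t_diff_le := ler_wpM2l t_ge0 diff_le.
have cross_ge0 : 0 <= t * t * Df * Dg by rewrite !mulr_ge0 ?normr_ge0.
lra.
Qed.

End WeightedNorm.

Section Messages.
Variable R : rcfType.

Definition bern_sd (m : R) : R := Num.sqrt (m * (1 - m)).

Definition msg_mean (g : bool -> R) (m : R) : R := (1 - m) * g false + m * g true.
Definition msg_dev (g : bool -> R) (m : R) : R := bern_sd m * (g true - g false).

Definition dev_weight (alpha : R) : R := (2 - 4 * alpha)^-1.

Lemma dev_weight_ge0 (alpha : R) : alpha < 2^-1 -> 0 <= dev_weight alpha.
Proof. by move=> a1; rewrite invr_ge0; lra. Qed.

Lemma bern_sd_le_half (m : R) : 0 <= m <= 1 -> 0 <= bern_sd m <= 2^-1.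
Proof.
move=> /andP [m0 m1]; rewrite /bern_sd sqrtr_ge0 /=.
have v0 : 0 <= m * (1 - m) by rewrite mulr_ge0 // subr_ge0.
have sq := sqr_sqrtr v0; have s0 := sqrtr_ge0 (m * (1 - m)).
have := sqr_ge0 (m - 2^-1).
move: sq s0; set s := Num.sqrt _ => sq s0; nra.
Qed.

Lemma norm_convex_le_max (m a b : R) : 0 <= m <= 1 ->
  `|(1 - m) * a + m * b| <= Num.max `|a| `|b|.
Proof.
move=> /andP [m0 m1].
have m1' : 0 <= 1 - m by rewrite subr_ge0.
rewrite (le_trans (ler_normD _ _)) // !normrM (ger0_norm m0) (ger0_norm m1').
have a_le : `|a| <= Num.max `|a| `|b| by rewrite le_max lexx.
have b_le : `|b| <= Num.max `|a| `|b| by rewrite le_max lexx orbT.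
have := ler_wpM2l m1' a_le; have := ler_wpM2l m0 b_le; lra.
Qed.

(* The deviation message costs at most half of [|g(1) - g(0)|] since
   [bern_sd <= 1/2]; [t (1 - 2 alpha) = 1/2] pays for the two
   [alpha]-perturbations. *)
Lemma wnorm_msg (alpha : R) (m g : bool -> R) :
  0 <= alpha -> alpha < 2^-1 ->
  (forall b, 0 <= m b <= 1) -> `|m true - m false| <= alpha ->
  `|bern_sd (m true) - bern_sd (m false)| <= alpha ->
  wnorm (dev_weight alpha) (fun b => msg_mean g (m b))
  + wnorm (dev_weight alpha) (fun b => msg_dev g (m b))
  <= wnorm (dev_weight alpha) g.
Proof.
move=> a0 a1 m01 dmu dsd; rewrite /wnorm.
set t := dev_weight alpha; set M := Num.max `|g false| _; set D := `|g true - g false|.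
have tD_split : t * D = D / 2 + 2 * (t * alpha * D).
  have h : 2 - 4 * alpha != 0 by rewrite gt_eqF //; lra.
  by rewrite /t /dev_weight; field.
have t0 : 0 <= t := dev_weight_ge0 a1.
have mean_max : Num.max `|msg_mean g (m false)| `|msg_mean g (m true)| <= M.
  by rewrite ge_max !norm_convex_le_max.
have mean_diff : `|msg_mean g (m true) - msg_mean g (m false)| <= alpha * D.
  rewrite (_ : _ - _ = (m true - m false) * (g true - g false)); last first.
    by rewrite /msg_mean; ring.
  by rewrite normrM ler_wpM2r.
have sd_le b : `|bern_sd (m b)| <= 2^-1.
  by case/andP: (bern_sd_le_half (m01 b)) => s0 s1; rewrite ger0_norm.
have dev_max : Num.max `|msg_dev g (m false)| `|msg_dev g (m true)| <= 2^-1 * D.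
  by rewrite ge_max !normrM !ler_wpM2r.
have dev_diff : `|msg_dev g (m true) - msg_dev g (m false)| <= alpha * D.
  by rewrite /msg_dev -mulrBl normrM ler_wpM2r.
have := ler_wpM2l t0 mean_diff; have := ler_wpM2l t0 dev_diff.
rewrite !mulrA; lra.
Qed.

Lemma one_add_dev_weight_le (alpha : R) : 0 <= alpha -> alpha < 2^-1 ->
  1 + dev_weight alpha <= ((2 - 2 * alpha) / (1 - 2 * alpha)) ^+ 2.
Proof.
move=> a0 a1; have u0 : 0 < 1 - 2 * alpha by lra.
have h1 : 1 - 2 * alpha != 0 by rewrite gt_eqF.
have h2 : 2 - 4 * alpha != 0 by rewrite gt_eqF //; lra.
have -> : ((2 - 2 * alpha) / (1 - 2 * alpha)) ^+ 2
   = 1 + dev_weight alpha + (2 + 3 * (1 - 2 * alpha)) / (2 * (1 - 2 * alpha) ^+ 2).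
  by rewrite /dev_weight; field; rewrite h1 h2.
rewrite lerDl divr_ge0 ?mulr_ge0 ?sqr_ge0 //; lra.
Qed.

End Messages.

Lemma big_subset_split (T : finType) (V : nmodType) (F : {set T} -> V) (A : {set T}) l :
  l \in A ->
  \sum_(S : {set T} | S \subset A) F S = \sum_(S : {set T} | S \subset A :\ l) (F S + F (l |: S)).
Proof.
move=> lA; rewrite big_split /= (bigID (fun S : {set T} => l \in S)) /= addrC; congr (_ + _).
  by apply: eq_bigl => S; rewrite subsetD1.
rewrite (reindex_onto (fun S => l |: S) (fun S => S :\ l)) /=; last first.
  by move=> S /andP [_ lS]; rewrite setD1K.
apply: eq_bigl => S; rewrite setU11 andbT subsetD1 subUset sub1set lA /=.
case lS: (l \in S) => /=; last by rewrite setU1K ?lS // eqxx.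
rewrite andbF; apply/negbTE/negP => /andP [_ /eqP E].
by move: lS; rewrite -E !inE eqxx.
Qed.

Lemma in_setU1_neq (T : finType) (S : {set T}) l v : v != l -> (v \in l |: S) = (v \in S).
Proof. by move=> vl; rewrite in_setU1 (negbTE vl). Qed.

(* The [0 - m] is [phi_l]'s numerator at [x_l = 0]. *)
Lemma sd_weighted_diff (F : fieldType) (m s a b : F) : s != 0 -> s ^+ 2 = m * (1 - m) ->
  m * a * ((1 - m) / s) + (1 - m) * b * ((0 - m) / s) = s * (a - b).
Proof.
move=> s0 s2.
have -> : m * a * ((1 - m) / s) + (1 - m) * b * ((0 - m) / s) = s ^+ 2 * (a - b) / s.
  by rewrite s2; field.
by field.
Qed.

Section LeafElimination.
Variables (R : rcfType) (n : nat) (par : 'I_n -> option 'I_n) (q : 'I_n -> bool -> R).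
Hypothesis probs_open : cond_probs_open par q.
Local Notation assignment := {ffun 'I_n -> bool}.
Local Notation mu := (bn_mu par q).
Implicit Types (A S : {set 'I_n}) (psi : 'I_n -> bool -> R) (c : R) (x : assignment).

Definition node_prob (v : 'I_n) (x : assignment) : R := if x v then mu v x else 1 - mu v x.

(* [psi v] is the (possibly message-updated) weight of node [v]; a node outside
   [A] has been summed out and contributes [1/2], which cancels against the
   [2^n] assignments of its no longer used variable. *)
Definition node_factor (A S : {set 'I_n}) (psi : 'I_n -> bool -> R) (v : 'I_n) (x : assignment) : R :=
  if v \in A then node_prob v x * psi v (x v) * (if v \in S then bn_phi par q v x else 1)
  else 2^-1.

Definition partial_coef (A : {set 'I_n}) (psi : 'I_n -> bool -> R) (c : R) (S : {set 'I_n}) : R :=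
  \sum_(x : assignment) c * \prod_(v < n) node_factor A S psi v x.

Definition partial_L1 (A : {set 'I_n}) (psi : 'I_n -> bool -> R) (c : R) : R :=
  \sum_(S : {set 'I_n} | S \subset A) `|partial_coef A psi c S|.

Definition flip (l : 'I_n) (x : assignment) : assignment :=
  [ffun i => if i == l then ~~ x l else x i].

Lemma flipK l : involutive (flip l).
Proof.
by move=> x; apply/ffunP => i; rewrite !ffunE eqxx negbK; case: eqP => [->|].
Qed.

Lemma sum_flip_mean l (F G H : assignment -> R) :
  (forall x, F (flip l x) = F x) -> (forall x, G x + G (flip l x) = H x) ->
  \sum_x F x * G x = \sum_x F x * H x / 2.
Proof.
move=> F_flip GH.
have sum_flip : \sum_x F x * G x = \sum_x F x * G (flip l x).
  rewrite (reindex_inj (inv_inj (flipK l))) /=.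
  by apply: eq_bigr => x _; rewrite F_flip.
have -> : \sum_x F x * H x / 2 = (\sum_x F x * G x + \sum_x F x * G x) / 2.
  rewrite [in X in _ + X]sum_flip -big_split /= mulr_suml.
  by apply: eq_bigr => x _; rewrite -GH mulrDr.
by field.
Qed.

Lemma mu_flip l v x : par v != Some l -> mu v (flip l x) = mu v x.
Proof.
rewrite /bn_mu; case: (par v) => [p|] //= pvl; rewrite ffunE.
by case: eqP => // pl; rewrite pl eqxx in pvl.
Qed.

Lemma node_factor_flip A S psi l v x : v != l -> (v \in A -> par v != Some l) ->
  node_factor A S psi v (flip l x) = node_factor A S psi v x.
Proof.
move=> vl pvl; rewrite /node_factor; case: ifP => vA //.
by rewrite /node_prob /bn_phi /bn_sigma mu_flip ?pvl // ffunE (negbTE vl).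
Qed.

Lemma node_factor_flip_mean A S psi l x : l \in A -> l \notin S -> par l != Some l ->
  node_factor A S psi l x + node_factor A S psi l (flip l x) = msg_mean (psi l) (mu l x).
Proof.
move=> lA lS pll; rewrite /node_factor lA (negbTE lS) /node_prob mu_flip // ffunE eqxx.
by rewrite /msg_mean; case: (x l) => /=; ring.
Qed.

Lemma node_factor_flip_dev A S psi l x : l \in A -> par l != Some l ->
  node_factor A (l |: S) psi l x + node_factor A (l |: S) psi l (flip l x)
  = msg_dev (psi l) (mu l x).
Proof.
move=> lA pll; rewrite /node_factor lA setU11 /node_prob /bn_phi /bn_sigma.
rewrite mu_flip // ffunE eqxx /msg_dev /bern_sd.
have [m0 m1] := probs_open l x; set m := mu l x.
have v0 : 0 < m * (1 - m) by rewrite mulr_gt0 // subr_gt0.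
have s0 : Num.sqrt (m * (1 - m)) != 0 by rewrite gt_eqF // sqrtr_gt0.
have s2 := sqr_sqrtr (ltW v0).
case: (x l) => /=; rewrite ?mulr1n ?mulr0n; first by rewrite sd_weighted_diff.
by rewrite addrC sd_weighted_diff.
Qed.

(* No other factor depends on [x_l], so averaging over flipping [x_l] replaces
   the factor of [l] by half its sum over both values of [x_l]; that half is
   the factor of [l] once it leaves [A]. *)
Lemma partial_coef_elim A A' S S' psi psi' c c' l (K : assignment -> R) :
  l \in A -> l \notin A' -> (forall u, u \in A -> par u != Some l) ->
  (forall x, node_factor A S psi l x + node_factor A S psi l (flip l x) = K x) ->
  (forall x, c' * \prod_(v < n | v != l) node_factor A' S' psi' v x
             = c * (\prod_(v < n | v != l) node_factor A S psi v x) * K x) ->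
  partial_coef A psi c S = partial_coef A' psi' c' S'.
Proof.
move=> lA lA' leaf HK Hprod; rewrite /partial_coef.
set F := fun x => c * \prod_(v < n | v != l) node_factor A S psi v x.
have -> : \sum_x c * \prod_(v < n) node_factor A S psi v x
          = \sum_x F x * node_factor A S psi l x.
  by apply: eq_bigr => x _; rewrite /F (bigD1 l) //=; ring.
rewrite (@sum_flip_mean l F _ K) //; last first.
  move=> x; rewrite /F; congr (_ * _); apply: eq_bigr => v vl.
  by apply: node_factor_flip => // vA; apply: leaf.
apply: eq_bigr => x _; rewrite -Hprod [in RHS](bigD1 l) //=.
by rewrite [node_factor A' _ _ l x]/node_factor (negbTE lA'); ring.
Qed.

Definition absorb (psi : 'I_n -> bool -> R) p (m : bool -> R) : 'I_n -> bool -> R :=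
  fun v => if v == p then fun b => psi p b * m b else psi v.

Lemma prod_absorb A S1 S2 psi p l m x : p \in A -> p != l ->
  (forall v, v != l -> (v \in S1) = (v \in S2)) ->
  \prod_(v < n | v != l) node_factor (A :\ l) S2 (absorb psi p m) v x
  = (\prod_(v < n | v != l) node_factor A S1 psi v x) * m (x p).
Proof.
move=> pA pl S12; rewrite (bigD1 p) //= [in RHS](bigD1 p) //=.
have -> : node_factor (A :\ l) S2 (absorb psi p m) p x = node_factor A S1 psi p x * m (x p).
  by rewrite /node_factor /absorb in_setD1 pl pA eqxx /= -(S12 p pl) mulrA [RHS]mulrAC.
rewrite (eq_bigr (node_factor A S1 psi ^~ x)); first by ring.
move=> v /andP [vl vp].
by rewrite /node_factor /absorb in_setD1 vl (negbTE vp) /= (S12 v vl).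
Qed.

Lemma prod_remove A S1 S2 psi l x : (forall v, v != l -> (v \in S1) = (v \in S2)) ->
  \prod_(v < n | v != l) node_factor (A :\ l) S2 psi v x
  = \prod_(v < n | v != l) node_factor A S1 psi v x.
Proof.
by move=> S12; apply: eq_bigr => v vl; rewrite /node_factor in_setD1 vl /= (S12 v vl).
Qed.

Lemma partial_L1_set0 psi c : partial_L1 set0 psi c = `|c|.
Proof.
rewrite /partial_L1 (eq_bigl (pred1 set0)) => [|S]; last by rewrite subset0.
rewrite big_pred1_eq /partial_coef (eq_bigr (fun _ => c * 2^-1 ^+ n)); last first.
  move=> x _; rewrite (eq_bigr (fun _ => 2^-1)) ?prodr_const ?card_ord // => v _.
  by rewrite /node_factor in_set0.
rewrite sumr_const card_ffun card_bool card_ord.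
suff -> : c * 2^-1 ^+ n *+ (2 ^ n)%N = c by [].
by rewrite -mulr_natr natrX -mulrA -exprMn mulVf ?pnatr_eq0 // expr1n mulr1.
Qed.

Lemma bn_L1_product psi (f : assignment -> R) : (forall x, f x = \prod_v psi v (x v)) ->
  bn_L1 par q f = partial_L1 setT psi 1.
Proof.
move=> fE; rewrite /bn_L1 /partial_L1 [in RHS](eq_bigl predT) => [|S]; last by rewrite subsetT.
apply: eq_bigr => S _; congr (Num.norm _); apply: eq_bigr => x _.
rewrite mul1r fE /node_factor; under [in RHS]eq_bigr => v _ do rewrite in_setT.
by rewrite [in RHS]big_split [in RHS]big_split /= -big_mkcond mulrA.
Qed.

Section Leaf.
Variables (A : {set 'I_n}) (l : 'I_n).
Hypotheses (lA : l \in A) (leaf : forall u, u \in A -> par u != Some l).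

Lemma partial_L1_elim_child p psi c : par l = Some p -> p \in A -> p != l ->
  partial_L1 A psi c
  = partial_L1 (A :\ l) (absorb psi p (fun b => msg_mean (psi l) (q l b))) c
  + partial_L1 (A :\ l) (absorb psi p (fun b => msg_dev (psi l) (q l b))) c.
Proof.
move=> lp pA pl.
have pll : par l != Some l by rewrite lp; apply: contra_neq pl => -[].
have lA' : l \notin A :\ l by rewrite !inE eqxx.
rewrite /partial_L1 (big_subset_split _ lA) -big_split /=; apply: eq_bigr => S.
rewrite subsetD1 => /andP [_ lS]; congr (_ + _); congr (Num.norm _).
  apply: (partial_coef_elim (l := l) (K := fun x => msg_mean (psi l) (mu l x))) => // x.
    exact: node_factor_flip_mean.
  by rewrite (prod_absorb (S1 := S)) // /bn_mu lp; ring.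
apply: (partial_coef_elim (l := l) (K := fun x => msg_dev (psi l) (mu l x))) => // x.
  exact: node_factor_flip_dev.
rewrite (prod_absorb (S1 := l |: S)) // ?/bn_mu ?lp; first by ring.
exact: in_setU1_neq.
Qed.

Lemma partial_L1_elim_root psi c : par l = None ->
  partial_L1 A psi c
  = partial_L1 (A :\ l) psi (c * msg_mean (psi l) (q l false))
  + partial_L1 (A :\ l) psi (c * msg_dev (psi l) (q l false)).
Proof.
move=> lr.
have pll : par l != Some l by rewrite lr.
have lA' : l \notin A :\ l by rewrite !inE eqxx.
rewrite /partial_L1 (big_subset_split _ lA) -big_split /=; apply: eq_bigr => S.
rewrite subsetD1 => /andP [_ lS]; congr (_ + _); congr (Num.norm _).
  apply: (partial_coef_elim (l := l) (K := fun x => msg_mean (psi l) (mu l x))) => // x.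
    exact: node_factor_flip_mean.
  by rewrite (@prod_remove A S S) // /bn_mu lr; ring.
apply: (partial_coef_elim (l := l) (K := fun x => msg_dev (psi l) (mu l x))) => // x.
  exact: node_factor_flip_dev.
rewrite (@prod_remove A (l |: S) S) ?/bn_mu ?lr; first by ring.
exact: in_setU1_neq.
Qed.

End Leaf.
End LeafElimination.

Section TreeLeaves.
Variables (n : nat) (par : 'I_n -> option 'I_n).
Hypothesis reaches_root : forall v, exists k, par (iter k (parent_step par) v) == None.

Definition depth (v : 'I_n) : nat := ex_minn (reaches_root v).

Lemma depth_parent u v : par u = Some v -> (depth v < depth u)%N.
Proof.
move=> puv; rewrite /depth.
case: (ex_minnP (reaches_root u)) => [[|k]]; first by rewrite /= puv.
rewrite iterSr /parent_step puv /= => reach_k _.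
by case: (ex_minnP (reaches_root v)) => kv _ /(_ k reach_k).
Qed.

Lemma parent_neq v p : par v = Some p -> p != v.
Proof. by move=> pvp; apply/eqP => pv; have := depth_parent pvp; rewrite pv ltnn. Qed.

Lemma exists_leaf (A : {set 'I_n}) : A != set0 ->
  exists2 l, l \in A & forall u, u \in A -> par u != Some l.
Proof.
case/set0Pn => i0 i0A; case: (@arg_maxnP _ i0 (mem A) depth i0A) => l lA lmax.
exists l => // u uA; apply/eqP => pul.
by have := leq_ltn_trans (lmax u uA) (depth_parent pul); rewrite ltnn.
Qed.

End TreeLeaves.

Lemma rooted_tree_reaches_root n (par : 'I_n -> option 'I_n) : is_rooted_tree par ->
  forall v, exists k, par (iter k (parent_step par) v) == None.
Proof. by case=> r [rootr [_ reach]] v; have [k kr] := reach v; exists k; rewrite kr rootr. Qed.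

Definition parent_closed n (par : 'I_n -> option 'I_n) (A : {set 'I_n}) : Prop :=
  forall v p, v \in A -> par v = Some p -> p \in A.

Section L1Bound.
Variables (R : rcfType) (n : nat) (par : 'I_n -> option 'I_n) (q : 'I_n -> bool -> R).
Variable alpha : R.
Hypotheses (alpha_ge0 : 0 <= alpha) (alpha_lt_half : alpha < 2^-1).
Hypotheses (probs_open : cond_probs_open par q) (diff_bnd : diff_bounded par q alpha).
Local Notation t := (dev_weight alpha).
Local Notation wnorm := (wnorm t).

Definition L1_bounded (A : {set 'I_n}) : Prop := forall psi c,
  partial_L1 par q A psi c <= `|c| * \prod_(v in A) wnorm (psi v).

Lemma wnorm_child_msgs l p (g : bool -> R) : par l = Some p ->
  wnorm (fun b => msg_mean g (q l b)) + wnorm (fun b => msg_dev g (q l b)) <= wnorm g.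
Proof.
move=> lp; have [mu_dif sd_dif] := diff_bnd l [ffun => true] [ffun => false].
rewrite /bn_sigma /bn_mu lp !ffunE in mu_dif sd_dif.
apply: wnorm_msg => // b; have [m0 m1] := probs_open l [ffun => b].
by rewrite /bn_mu lp ffunE in m0 m1; rewrite !ltW.
Qed.

Lemma norm_root_msgs l (g : bool -> R) : par l = None ->
  `|msg_mean g (q l false)| + `|msg_dev g (q l false)| <= wnorm g.
Proof.
move=> lr; have [m0 m1] := probs_open l [ffun => false]; rewrite /bn_mu lr in m0 m1.
have := @wnorm_msg _ alpha (fun _ => q l false) g alpha_ge0 alpha_lt_half.
by rewrite !subrr !normr0 !wnorm_const; apply => // _; rewrite !ltW.
Qed.

Lemma wnorm_prod_ge0 (B : {set 'I_n}) psi : 0 <= \prod_(v in B) wnorm (psi v).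
Proof. by rewrite prodr_ge0 // => v _; rewrite wnorm_ge0 ?dev_weight_ge0. Qed.

Section Leaf.
Variables (A : {set 'I_n}) (l : 'I_n).
Hypotheses (lA : l \in A) (leaf : forall u, u \in A -> par u != Some l).
Hypothesis bounded_rest : L1_bounded (A :\ l).

Lemma L1_bounded_elim_child p : par l = Some p -> p \in A -> p != l -> L1_bounded A.
Proof.
move=> lp pA pl psi c; rewrite (partial_L1_elim_child probs_open lA leaf psi c lp pA pl).
have pA' : p \in A :\ l by rewrite in_setD1 pl.
set P := \prod_(v in (A :\ l) :\ p) wnorm (psi v).
have wnorm_absorb m : \prod_(v in A :\ l) wnorm (absorb psi p m v)
                      = wnorm (fun b => psi p b * m b) * P.
  rewrite (big_setD1 p pA') /= /absorb eqxx; congr (_ * _).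
  by apply: eq_bigr => v; rewrite in_setD1 => /andP [/negbTE -> _].
rewrite (big_setD1 l lA) (big_setD1 p pA') /= -/P.
apply: le_trans (lerD (bounded_rest _ c) (bounded_rest _ c)) _.
rewrite !wnorm_absorb -mulrDr ler_wpM2l // -mulrDl mulrA ler_wpM2r ?wnorm_prod_ge0 //.
have t0 := dev_weight_ge0 alpha_lt_half.
apply: le_trans (lerD (wnorm_mul t0 _ _) (wnorm_mul t0 _ _)) _.
by rewrite -mulrDr mulrC ler_wpM2r ?wnorm_ge0 ?(wnorm_child_msgs _ lp).
Qed.

Lemma L1_bounded_elim_root : par l = None -> L1_bounded A.
Proof.
move=> lr psi c; rewrite (partial_L1_elim_root probs_open lA leaf psi c lr) (big_setD1 l lA) /=.
apply: le_trans (lerD (bounded_rest _ _) (bounded_rest _ _)) _.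
rewrite !(normrM c) -mulrDl -mulrDr mulrA ler_wpM2r ?wnorm_prod_ge0 //.
by rewrite ler_wpM2l ?norm_root_msgs.
Qed.

End Leaf.

Lemma L1_bounded_parent_closed (A : {set 'I_n}) : is_rooted_tree par ->
  parent_closed par A -> L1_bounded A.
Proof.
move=> /rooted_tree_reaches_root reach.
elim: {A}#|A| {-2}A (erefl #|A|) => [|k IH] A cardA closedA.
  have -> : A = set0 by apply/eqP; rewrite -cards_eq0 cardA.
  by move=> psi c; rewrite partial_L1_set0 big_set0 mulr1.
have [l lA leaf] : exists2 l, l \in A & forall u, u \in A -> par u != Some l.
  by apply: (exists_leaf reach); rewrite -card_gt0 cardA.
have bounded_rest : L1_bounded (A :\ l).
  apply: IH; first by move: cardA; rewrite (cardsD1 l) lA => -[].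
  move=> v p; rewrite !in_setD1 => /andP [vl vA] pvp; rewrite (closedA v p vA pvp) andbT.
  by apply: contra_neq (leaf v vA) => pl; rewrite pvp pl.
case lp : (par l) => [p|]; last exact: L1_bounded_elim_root lp.
exact: L1_bounded_elim_child lp (closedA l p lA lp) (parent_neq reach lp).
Qed.

End L1Bound.

Section Conjunction.
Variables (R : rcfType) (n : nat) (T0 T1 : {set 'I_n}).

Definition literal_weight (v : 'I_n) (b : bool) : R :=
  (if v \in T1 then (b : nat)%:R else 1) * (if v \in T0 then 1 - (b : nat)%:R else 1).

Lemma conjunctionE (x : {ffun 'I_n -> bool}) :
  conjunction R T0 T1 x = \prod_v literal_weight v (x v).
Proof. by rewrite /literal_weight big_split /= -!big_mkcond. Qed.

Lemma wnorm_literal_le (t : R) v : 0 <= t ->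
  wnorm t (literal_weight v) <= if v \in T0 :|: T1 then 1 + t else 1.
Proof.
move=> t0; rewrite /wnorm /literal_weight in_setU.
case: (v \in T0); case: (v \in T1) => /=;
  rewrite ?mulr1n ?mulr0n ?mul0r ?mulr0 ?mul1r ?mulr1 ?subr0 ?subrr ?sub0r;
  rewrite ?normr0 ?normrN ?normr1 ?maxxx ?(max_l ler01) ?(max_r ler01); lra.
Qed.

Lemma prod_wnorm_literal_le (t : R) : 0 <= t ->
  \prod_(v in [set: 'I_n]) wnorm t (literal_weight v) <= (1 + t) ^+ #|T0 :|: T1|.
Proof.
move=> t0.
apply: (@le_trans _ _ (\prod_(v in [set: 'I_n]) if v \in T0 :|: T1 then 1 + t else 1)).
  by apply: ler_prod => v _; rewrite wnorm_ge0 ?wnorm_literal_le.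
by rewrite -prodr_const [leRHS]big_mkcond /=; under eq_bigl do rewrite in_setT.
Qed.

End Conjunction.

Theorem mainTheorem7 (R : rcfType) (n : nat) (par : 'I_n -> option 'I_n)
  (q : 'I_n -> bool -> R) (alpha : R) (d : nat) (T0 T1 : {set 'I_n}) :
  0 <= alpha -> alpha < 2^-1 ->
  is_rooted_tree par ->
  cond_probs_open par q ->
  diff_bounded par q alpha ->
  [disjoint T0 & T1] -> #|T0 :|: T1| = d ->
  bn_L1 par q (conjunction R T0 T1)
    <= ((2 - 2 * alpha) / (1 - 2 * alpha)) ^+ (2 * d).
Proof.
move=> a0 a1 tree open diff_bnd _ card_d.
have t0 := dev_weight_ge0 a1.
rewrite (bn_L1_product par q (psi := literal_weight R T0 T1)) => [|x]; last exact: conjunctionE.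
have closed_setT : parent_closed par [set: 'I_n] by move=> v p _ _; rewrite in_setT.
apply: le_trans (L1_bounded_parent_closed a0 a1 open diff_bnd tree closed_setT _ 1) _.
rewrite normr1 mul1r; apply: le_trans (prod_wnorm_literal_le _ _ t0) _.
by rewrite card_d exprM lerXn2r ?one_add_dev_weight_le // nnegrE ?sqr_ge0 ?addr_ge0.
Qed.
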